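(* Let $n\ge1$, $N=2^n$. Then $S^{(0)}_{0,0}=0$, $S^{(0)}_{0,1}=1$, and for all $w$: (i) if $0\le i<N/2$, then $S^{(n)}_{i,w}=\sum_{0\le w'\le \min(w,N/2),\ w'\equiv w \ (\mathrm{mod}\ 2)} S^{(n-1)}_{i,w'}\binom{N/2-w'}{(w-w')/2}2^{w'}$; (ii) if $N/2\le i<N$, then $S^{(n)}_{i,2w}=S^{(n-1)}_{i-N/2,w}$ and $S^{(n)}_{i,2w+1}=0$. Moreover, the numbers $T^{(n)}_{i,w}$ satisfy exactly the same recursions (i) and (ii) (with $S$ replaced by $T$), with initial values $T^{(0)}_{0,0}=1$, $T^{(0)}_{0,1}=0$.
   Context: All vectors are binary (over $GF(2)$), indices are zero-based. Let $G_2=\begin{pmatrix}1&0\\1&1\end{pmatrix}$ and $G_N=G_2^{\otimes n}$ for $N=2^n$ (with $G_1=(1)$), and let $\mathbf{g}_0,\ldots,\mathbf{g}_{N-1}$ denote the rows of $G_N$. For $0\le i<N$, $S^{(n)}_{i,w}$ is the number of words of Hamming weight $w$ in $\mathbf{g}_i+\langle\mathbf{g}_{i+1},\ldots,\mathbf{g}_{N-1}\rangle$, and $T^{(n)}_{i,w}$ is the number of words of Hamming weight $w$ in the linear span $\langle\mathbf{g}_{i+1},\ldots,\mathbf{g}_{N-1}\rangle$. *)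

From HB Require Import structures.
From mathcomp Require Import all_boot all_order all_algebra.
Set Implicit Arguments. Unset Strict Implicit. Unset Printing Implicit Defensive.
Import GRing.Theory.
Local Open Scope ring_scope.

(* Entries of G_2 = [[1,0],[1,1]] (zero-based indices a, b < 2). *)
Definition G2e (a b : nat) : bool := (a < 2)%N && (b <= a)%N.

(* Entries of the Kronecker power G_2^{(x)n}, by the defining formula of the
   Kronecker product  G_2^{(x)(n+1)} = G_2 (x) G_2^{(x)n}:
   (A (x) B)_{i,j} = A_{i / 2^n, j / 2^n} * B_{i mod 2^n, j mod 2^n}. *)
Fixpoint kronG2e (n i j : nat) : bool :=
  match n with
  | 0 => (i == 0)%N && (j == 0)%N
  | m.+1 => G2e (i %/ 2 ^ m) (j %/ 2 ^ m) && kronG2e m (i %% 2 ^ m) (j %% 2 ^ m)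
  end.

Definition GN (n : nat) : 'M['F_2]_(2 ^ n) :=
  \matrix_(i, j) (kronG2e n i j)%:R.

(* row g_i of G_N (i : nat, meaningful for i < 2^n) *)
Definition grow (n i : nat) : 'rV['F_2]_(2 ^ n) :=
  \row_j (kronG2e n i j)%:R.

Definition tailspan (n i : nat) : 'M['F_2]_(2 ^ n) :=
  \matrix_(k < 2 ^ n) (if (i < k)%N then row k (GN n) else 0).

Definition wt (N : nat) (v : 'rV['F_2]_N) : nat := #|[set j | v 0 j != 0]|.

(* S^{(n)}_{i,w}: number of words of weight w in g_i + <g_{i+1},...,g_{N-1}> *)
Definition Scount (n i w : nat) : nat :=
  #|[set v : 'rV['F_2]_(2 ^ n) | (v - grow n i <= tailspan n i)%MS && (wt v == w)]|.

(* T^{(n)}_{i,w}: number of words of weight w in <g_{i+1},...,g_{N-1}> *)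
Definition Tcount (n i w : nat) : nat :=
  #|[set v : 'rV['F_2]_(2 ^ n) | (v <= tailspan n i)%MS && (wt v == w)]|.

From mathcomp Require Import all_boot all_order all_algebra.
From mathcomp Require Import zify.
Set Implicit Arguments. Unset Strict Implicit. Unset Printing Implicit Defensive.
Import GRing.Theory.
Local Open Scope ring_scope.

(* Writing a word of length 2N as (x_lo | x_hi), the Kronecker structure gives
   G_2N = [[G_N, 0], [G_N, G_N]], so (z_lo | z_hi) G_2N = ((z_lo+z_hi) G_N | z_hi G_N).
   We describe the coset of index i with leading coefficient c (c = 1 for S,
   c = 0 for T) as the set of z G_N with z_k = 0 for k < i and z_i = c.
   - If i < N: z_hi is free and G_N is invertible, so v lies in the coset iff
     v_lo + v_hi lies in the half-size coset while v_hi is arbitrary.  Since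
     wt v = wt(u + b) + wt b for u = v_lo + v_hi and b = v_hi, counting the b of
     each total weight (a choice of support inside and outside supp u) yields
     the binomial convolution (i).
   - If i >= N: z_lo = 0, so v = (x | x) with x in the coset of index i - N,
     and wt v = 2 wt x, which is (ii). *)

Lemma F2_cases (x : 'F_2) : x = 0 \/ x = 1.
Proof. by case: x => [[|[|k]]] // ?; [left|right]; apply: val_inj. Qed.

Lemma F2_nat_neq0 (x : 'F_2) : (x != 0)%:R = x.
Proof. by case: (F2_cases x) => ->. Qed.

Lemma addmx_F2 a b (x : 'M['F_2]_(a, b)) : x + x = 0.
Proof. by apply/matrixP => i j; rewrite !mxE (addrr_pchar2 (pchar_Fp _)). Qed.

Lemma addmxK_F2 a b (x y : 'M['F_2]_(a, b)) : x + y + y = x.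
Proof. by rewrite -addrA addmx_F2 addr0. Qed.

Lemma expS_halves m : (2 ^ m + 2 ^ m = 2 ^ m.+1)%N.
Proof. by rewrite expnS mul2n addnn. Qed.

Definition lo m (j : 'I_(2 ^ m)) : 'I_(2 ^ m.+1) :=
  cast_ord (expS_halves m) (lshift (2 ^ m) j).
Definition hi m (j : 'I_(2 ^ m)) : 'I_(2 ^ m.+1) :=
  cast_ord (expS_halves m) (rshift (2 ^ m) j).

Lemma ord_halves_ind m (P : 'I_(2 ^ m.+1) -> Prop) :
  (forall j, P (lo j)) -> (forall j, P (hi j)) -> forall k, P k.
Proof.
move=> Plo Phi k.
by case: (splitP (cast_ord (esym (expS_halves m)) k)) => j hj;
  [have := Plo j | have := Phi j]; congr P; apply: val_inj; move: hj => /= ->.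
Qed.

Lemma sum_halves m (V : nmodType) (F : 'I_(2 ^ m.+1) -> V) :
  \sum_k F k = \sum_j F (lo j) + \sum_j F (hi j).
Proof.
rewrite (reindex (cast_ord (expS_halves m))) ?big_split_ord //.
by exists (cast_ord (esym (expS_halves m))) => x _; rewrite ?cast_ordK ?cast_ordKV.
Qed.

Section Halves.
Variable m : nat.
Implicit Types (v : 'rV['F_2]_(2 ^ m.+1)) (a b : 'rV['F_2]_(2 ^ m)).

Definition vlo v : 'rV['F_2]_(2 ^ m) := \row_j v 0 (lo j).
Definition vhi v : 'rV['F_2]_(2 ^ m) := \row_j v 0 (hi j).
Definition vjoin a b : 'rV['F_2]_(2 ^ m.+1) :=
  \row_k match split (cast_ord (esym (expS_halves m)) k) with
         | inl j => a 0 j | inr j => b 0 j end.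

Lemma vlo_join a b : vlo (vjoin a b) = a.
Proof. by apply/rowP => j; rewrite !mxE cast_ordK (unsplitK (inl _)). Qed.

Lemma vhi_join a b : vhi (vjoin a b) = b.
Proof. by apply/rowP => j; rewrite !mxE cast_ordK (unsplitK (inr _)). Qed.

Lemma halves_inj v v' : vlo v = vlo v' -> vhi v = vhi v' -> v = v'.
Proof.
move=> /rowP elo /rowP ehi; apply/rowP; apply: ord_halves_ind => j.
  by have := elo j; rewrite !mxE.
by have := ehi j; rewrite !mxE.
Qed.

Lemma vjoinK v : vjoin (vlo v) (vhi v) = v.
Proof. by apply: halves_inj; rewrite ?vlo_join ?vhi_join. Qed.

Lemma wt_halves v : wt v = (wt (vlo v) + wt (vhi v))%N.
Proof.
rewrite /wt -!sum1dep_card [in LHS]big_mkcond sum_halves -!big_mkcond /=.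
by congr (_ + _)%N; apply: eq_bigl => j; rewrite mxE.
Qed.

Lemma wt_join a b : wt (vjoin a b) = (wt a + wt b)%N.
Proof. by rewrite wt_halves vlo_join vhi_join. Qed.

End Halves.

Lemma divmod_lo m j : (j < 2 ^ m)%N -> (j %/ 2 ^ m = 0 /\ j %% 2 ^ m = j)%N.
Proof. by move=> hj; rewrite divn_small // modn_small. Qed.

Lemma divmod_hi m j : (j < 2 ^ m)%N ->
  ((2 ^ m + j) %/ 2 ^ m = 1 /\ (2 ^ m + j) %% 2 ^ m = j)%N.
Proof.
move=> hj; rewrite -{1 3}(mul1n (2 ^ m)%N) divnMDl ?expn_gt0 // modnMDl.
by rewrite divn_small // modn_small.
Qed.

Section GNBlocks.
Variable m : nat.
Implicit Types (k j : 'I_(2 ^ m)) (z : 'rV['F_2]_(2 ^ m.+1)).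

Lemma GN_lo_lo k j : GN m.+1 (lo k) (lo j) = GN m k j.
Proof.
rewrite !mxE /=; have [-> ->] := divmod_lo (ltn_ord k).
by have [-> ->] := divmod_lo (ltn_ord j).
Qed.

Lemma GN_hi_lo k j : GN m.+1 (hi k) (lo j) = GN m k j.
Proof.
rewrite !mxE /=; have [-> ->] := divmod_hi (ltn_ord k).
by have [-> ->] := divmod_lo (ltn_ord j).
Qed.

Lemma GN_lo_hi k j : GN m.+1 (lo k) (hi j) = 0.
Proof.
rewrite !mxE /=; have [-> ->] := divmod_lo (ltn_ord k).
by have [-> ->] := divmod_hi (ltn_ord j).
Qed.

Lemma GN_hi_hi k j : GN m.+1 (hi k) (hi j) = GN m k j.
Proof.
rewrite !mxE /=; have [-> ->] := divmod_hi (ltn_ord k).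
by have [-> ->] := divmod_hi (ltn_ord j).
Qed.

Lemma vlo_mulGN z : vlo (z *m GN m.+1) = (vlo z + vhi z) *m GN m.
Proof.
apply/rowP => j; rewrite mulmxDl !mxE sum_halves.
by congr (_ + _); apply: eq_bigr => k _; rewrite ?GN_lo_lo ?GN_hi_lo !mxE.
Qed.

Lemma vhi_mulGN z : vhi (z *m GN m.+1) = vhi z *m GN m.
Proof.
apply/rowP => j; rewrite !mxE sum_halves big1 ?add0r.
  by apply: eq_bigr => k _; rewrite GN_hi_hi !mxE.
by move=> k _; rewrite GN_lo_hi mulr0.
Qed.

End GNBlocks.

Lemma GN_surj n (y : 'rV['F_2]_(2 ^ n)) : exists z, y = z *m GN n.
Proof.
elim: n y => [|m IH] y.
  by exists y; apply/rowP => j; rewrite !mxE big_ord1 !ord1 !mxE mulr1.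
have [zhi ehi] := IH (vhi y); have [zlo elo] := IH (vlo y).
exists (vjoin (zlo + zhi) zhi); apply: halves_inj.
  by rewrite vlo_mulGN vlo_join vhi_join addmxK_F2 -elo.
by rewrite vhi_mulGN vhi_join -ehi.
Qed.

Definition coset_coeffs n i c (z : 'rV['F_2]_(2 ^ n)) : bool :=
  [forall k : 'I_(2 ^ n),
    ((k < i)%N ==> (z 0 k == 0)) && ((val k == i) ==> (z 0 k == c))].
Arguments coset_coeffs : clear implicits.

Definition in_coset n i c (v : 'rV['F_2]_(2 ^ n)) : bool :=
  [exists z, coset_coeffs n i c z && (v == z *m GN n)].
Arguments in_coset : clear implicits.

Definition coset_count n i c w : nat :=
  #|[set v | in_coset n i c v && (wt v == w)]|.

Definition tail_coeffs n i (D : 'rV['F_2]_(2 ^ n)) : 'rV['F_2]_(2 ^ n) :=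
  \row_k (if (i < k)%N then D 0 k else 0).

Lemma mul_tailspan n i D : D *m tailspan n i = tail_coeffs i D *m GN n.
Proof.
apply/rowP => j; rewrite !mxE; apply: eq_bigr => k _; rewrite !mxE.
by case: ifP; rewrite ?mxE ?mulr0 ?mul0r.
Qed.

Lemma growE n i (lt_i : (i < 2 ^ n)%N) :
  grow n i = delta_mx 0 (Ordinal lt_i) *m GN n.
Proof. by rewrite -rowE; apply/rowP => j; rewrite !mxE. Qed.

Lemma tailspan_coset n i (lt_i : (i < 2 ^ n)%N) c v :
  (v - c *: grow n i <= tailspan n i)%MS = in_coset n i c v.
Proof.
pose e : 'rV['F_2]_(2 ^ n) := delta_mx 0 (Ordinal lt_i).
have ek (k : 'I_(2 ^ n)) : e 0 k = (val k == i)%:R by rewrite mxE.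
apply/idP/idP.
  case/submxP => D eD; apply/existsP; exists (tail_coeffs i D + c *: e).
  apply/andP; split.
    apply/forallP => k; rewrite mxE [e]lock !mxE -lock ek /=.
    by case: (ltngtP k i) => h; rewrite /= ?mulr0 ?mulr1 ?addr0 ?add0r.
  by apply/eqP; rewrite mulmxDl -scalemxAl -growE -mul_tailspan -eD subrK.
case/existsP => z /andP [/forallP zc /eqP ->]; apply/submxP.
exists (z - c *: e); rewrite mul_tailspan (growE lt_i) -/e scalemxAl -mulmxBl.
congr (_ *m _); apply/rowP => k; rewrite mxE [e]lock !mxE -lock ek.
case: ifP => // /negbT; rewrite -leqNgt => hk; have /andP [] := zc k.
case: (ltngtP k i) hk => // h _.
  by move=> /implyP /(_ isT) /eqP -> _; rewrite mulr0 subr0.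
by move=> _ /implyP /(_ isT) /eqP ->; rewrite mulr1 subrr.
Qed.

Section CosetHalves.
Variables (m i : nat) (c : 'F_2).
Implicit Types (z v : 'rV['F_2]_(2 ^ m.+1)).

Lemma coset_coeffs_lo z : (i < 2 ^ m)%N ->
  coset_coeffs m.+1 i c z = coset_coeffs m i c (vlo z).
Proof.
move=> hm; apply/forallP/forallP => [zc j | zc].
  by have := zc (lo j); rewrite mxE.
apply: ord_halves_ind => j; first by have := zc j; rewrite mxE.
have -> /= : (2 ^ m + j < i)%N = false by lia.
by have -> : (2 ^ m + j == i)%N = false by lia.
Qed.

Lemma coset_coeffs_hi z : (2 ^ m <= i)%N ->
  coset_coeffs m.+1 i c z = (vlo z == 0) && coset_coeffs m (i - 2 ^ m) c (vhi z).
Proof.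
move=> hm; have ltj (j : 'I_(2 ^ m)) : (j < i)%N by have := ltn_ord j; lia.
have hi_lt (j : 'I_(2 ^ m)) : (2 ^ m + j < i)%N = (j < i - 2 ^ m)%N by lia.
have hi_eq (j : 'I_(2 ^ m)) : (2 ^ m + j == i)%N = (j == i - 2 ^ m :> nat)%N by lia.
apply/forallP/andP => [zc | [/eqP zlo /forallP zc]].
  split; last by apply/forallP => j; have := zc (hi j); rewrite /= mxE hi_lt hi_eq.
  by apply/eqP/rowP => j; have := zc (lo j); rewrite /= ltj !mxE => /andP [/eqP].
apply: ord_halves_ind => j; last by have := zc j; rewrite /= mxE hi_lt hi_eq.
have /rowP/(_ j) := zlo; rewrite !mxE /= ltj => ->.
by rewrite eqxx /= (ltn_eqF (ltj j)).
Qed.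

Lemma in_coset_lo v : (i < 2 ^ m)%N ->
  in_coset m.+1 i c v = in_coset m i c (vlo v + vhi v).
Proof.
move=> hm; apply/existsP/existsP => [[z /andP [zc /eqP ->]] |
                                     [zlo /andP [zc /eqP elo]]].
  exists (vlo z); rewrite -coset_coeffs_lo // zc vlo_mulGN vhi_mulGN.
  by rewrite -mulmxDl addmxK_F2 eqxx.
have [zhi ehi] := GN_surj (vhi v).
exists (vjoin zlo zhi); rewrite coset_coeffs_lo // vlo_join zc /=.
apply/eqP/halves_inj; rewrite ?vlo_mulGN ?vhi_mulGN ?vlo_join ?vhi_join //.
by rewrite mulmxDl -elo -ehi addmxK_F2.
Qed.

Lemma in_coset_hi v : (2 ^ m <= i)%N ->
  in_coset m.+1 i c v = (vlo v == vhi v) && in_coset m (i - 2 ^ m) c (vlo v).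
Proof.
move=> hm; apply/existsP/andP => [[z /andP [zc /eqP ->]] |
                                  [/eqP elh /existsP [z /andP [zc /eqP ez]]]].
  move: zc; rewrite coset_coeffs_hi // => /andP [/eqP zlo zc].
  rewrite vlo_mulGN vhi_mulGN zlo add0r eqxx; split => //.
  by apply/existsP; exists (vhi z); rewrite zc eqxx.
exists (vjoin 0 z); rewrite coset_coeffs_hi // vlo_join vhi_join eqxx zc /=.
by apply/eqP/halves_inj;
  rewrite ?vlo_mulGN ?vhi_mulGN ?vlo_join ?vhi_join ?add0r -?ez.
Qed.

End CosetHalves.

Lemma card_set_bij (T1 T2 : finType) (f : T1 -> T2) (g : T2 -> T1)
    (P1 : pred T1) (P2 : pred T2) :
  (forall x, P1 x -> P2 (f x) /\ g (f x) = x) ->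
  (forall y, P2 y -> P1 (g y) /\ f (g y) = y) ->
  #|[set x | P1 x]| = #|[set y | P2 y]|.
Proof.
move=> fK gK; rewrite -(@card_in_imset _ _ f [set x | P1 x]); last first.
  by move=> x1 x2; rewrite !inE => /fK [_ e1] /fK [_ e2] ef; rewrite -e1 ef e2.
apply: eq_card => y; rewrite inE; apply/imsetP/idP => [[x] | /gK [Pg <-]].
  by rewrite inE => /fK [? _] ->.
by exists (g y); rewrite ?inE.
Qed.

Lemma card_set_pair (T1 T2 : finType) (P : pred T1) (Q : T1 -> pred T2) :
  #|[set p : T1 * T2 | P p.1 && Q p.1 p.2]| = (\sum_(x | P x) #|[set y | Q x y]|)%N.
Proof.
rewrite -sum1dep_card -(pair_big_dep _ _ (fun _ _ => 1%N)) /=.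
rewrite big_mkcond [RHS]big_mkcond; apply: eq_bigr => x _.
by case: (P x) => //; rewrite -sum1dep_card.
Qed.

Lemma card_set_sum (T : finType) (P : pred T) : #|[set x | P x]| = (\sum_x P x)%N.
Proof. by rewrite -sum1dep_card big_mkcond; apply: eq_bigr => x _; case: (P x). Qed.

(* Subsets B of T with exactly k elements outside U: B meets U arbitrarily
   and picks k elements of the complement of U. *)
Lemma card_sets_outside (T : finType) (U : {set T}) k :
  #|[set B : {set T} | #|B :\: U| == k]| = (2 ^ #|U| * 'C(#|T| - #|U|, k))%N.
Proof.
pose inside (P : {set T}) := P \subset U.
pose outside_k (Q : {set T}) := (Q \subset ~: U) && (#|Q| == k).
rewrite (@card_set_bij _ _ (fun B => (B :&: U, B :\: U)) (fun p => p.1 :|: p.2) _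
           (fun p => inside p.1 && outside_k p.2)); first last.
- case=> P Q /andP [/subsetP sP /andP [/subsetP sQ /eqP cQ]] /=.
  have split_PQ : (P :|: Q) :&: U = P /\ (P :|: Q) :\: U = Q.
    have memPQ x : ((x \in P) ==> (x \in U)) && ((x \in Q) ==> (x \notin U)).
      by apply/andP; split; apply/implyP; [move/sP | move/sQ]; rewrite ?inE.
    by split; apply/setP => x; move: (memPQ x); rewrite !inE;
       case: (x \in P); case: (x \in Q); case: (x \in U).
  by case: split_PQ => -> ->; rewrite cQ.
- move=> B /eqP cB; rewrite /= setID; split => //.
  by rewrite /inside /outside_k subsetIr cB eqxx andbT setDE subsetIr.
rewrite (card_set_pair inside (fun _ => outside_k)).
rewrite (eq_bigr (fun _ => 'C(#|~: U|, k))) => [|P _]; last first.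
  by rewrite -cards_draws; apply: eq_card => Q; rewrite !inE.
rewrite sum_nat_cond_const -(cardsC U) addKn -card_powerset.
by congr (_ * _)%N; apply: eq_card => P; rewrite !inE.
Qed.

Definition supp M (v : 'rV['F_2]_M) : {set 'I_M} := [set j | v 0 j != 0].

Lemma card_rows_by_supp M (P : pred {set 'I_M}) :
  #|[set b : 'rV['F_2]_M | P (supp b)]| = #|[set B | P B]|.
Proof.
apply: (@card_set_bij _ _ (@supp M) (fun B => \row_j ((j \in B)%:R : 'F_2))).
  by move=> b Pb; split => //; apply/rowP => j; rewrite !mxE inE F2_nat_neq0.
move=> B PB; suff -> : supp (\row_j ((j \in B)%:R : 'F_2)) = B by [].
by apply/setP => j; rewrite !inE mxE; case: (j \in B); rewrite ?oner_eq0 ?eqxx.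
Qed.

Lemma wt_add_twice M (u b : 'rV['F_2]_M) :
  (wt (u + b) + wt b = wt u + 2 * #|supp b :\: supp u|)%N.
Proof.
have -> : supp b :\: supp u = [set j | (b 0 j != 0) && (u 0 j == 0)].
  by apply/setP => j; rewrite !inE negbK andbC.
rewrite /wt !card_set_sum -big_split big_distrr -big_split /=.
apply: eq_bigr => j _; rewrite mxE.
by case: (F2_cases (u 0 j)) => ->; case: (F2_cases (b 0 j)) => ->.
Qed.

(* Closed form for the number of b with wt(u + b) + wt b = w, wt u = a. *)
Definition wt_pair_count (M a w : nat) : nat :=
  if (odd a == odd w) && (a <= w)%N then ('C(M - a, (w - a) %/ 2) * 2 ^ a)%N
  else 0%N.

(* w must have the parity of wt u, and b has exactly (w - wt u)/2 support
   points outside supp u while meeting supp u arbitrarily. *)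
Lemma card_wt_pairs M (u : 'rV['F_2]_M) w :
  #|[set b : 'rV['F_2]_M | (wt (u + b) + wt b == w)%N]| = wt_pair_count M (wt u) w.
Proof.
rewrite /wt_pair_count; case: ifP => [/andP [/eqP par le] | bad].
  set k := ((w - wt u) %/ 2)%N.
  have ew : w = (wt u + 2 * k)%N.
    have := divn_eq (w - wt u) 2; rewrite modn2 oddB // par addbb -/k; lia.
  transitivity #|[set b : 'rV['F_2]_M | #|supp b :\: supp u| == k]|.
    by apply: eq_card => b; rewrite !inE wt_add_twice {1}ew eqn_add2l eqn_mul2l.
  rewrite (card_rows_by_supp (fun B => #|B :\: supp u| == k)).
  by rewrite card_sets_outside card_ord mulnC.
apply/eqP; rewrite cards_eq0; apply/eqP/setP => b; rewrite !inE wt_add_twice.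
by apply/negbTE/eqP => ew; move: bad; rewrite -ew oddD oddM addbF eqxx leq_addr.
Qed.

Lemma wt_le M (u : 'rV['F_2]_M) : (wt u < M.+1)%N.
Proof. by rewrite ltnS /wt -[X in (_ <= X)%N]card_ord max_card. Qed.

Lemma sum_by_wt M (P : pred 'rV['F_2]_M) (g : nat -> nat) :
  (\sum_(u | P u) g (wt u) =
   \sum_(w < M.+1) #|[set u | P u && (wt u == w)]| * g w)%N.
Proof.
transitivity (\sum_(u | P u) \sum_(w < M.+1) (wt u == w) * g w)%N.
  apply: eq_bigr => u _; rewrite (bigD1 (Ordinal (wt_le u))) //= eqxx mul1n.
  by rewrite big1 ?addn0 // => w; rewrite -val_eqE /= eq_sym => /negbTE ->.
rewrite exchange_big; apply: eq_bigr => w _; rewrite -big_distrl /= card_set_sum.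
by rewrite big_mkcond; congr (_ * _)%N; apply: eq_bigr => u _; case: (P u).
Qed.

Section CosetCounts.
Variables (m i : nat) (c : 'F_2).

(* Case i < N: the map v |-> (v_lo + v_hi, v_hi) is a bijection onto pairs
   (x, b) with x in the half-size coset, and wt v = wt(x + b) + wt b. *)
Lemma coset_count_lo_sum w : (i < 2 ^ m)%N ->
  coset_count m.+1 i c w =
  (\sum_(w' < (2 ^ m).+1) coset_count m i c w' * wt_pair_count (2 ^ m) w' w)%N.
Proof.
move=> hm; rewrite /coset_count.
rewrite (@card_set_bij _ _ (fun v => (vlo v + vhi v, vhi v))
                        (fun p => vjoin (p.1 + p.2) p.2)
   _ (fun p => in_coset m i c p.1 && (wt (p.1 + p.2) + wt p.2 == w)%N)); first last.
- case=> x y /andP [xC ew] /=; rewrite vlo_join vhi_join addmxK_F2.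
  by rewrite in_coset_lo // vlo_join vhi_join addmxK_F2 xC wt_join.
- move=> v /andP [vC ew]; rewrite addmxK_F2 vjoinK -in_coset_lo // vC.
  by rewrite -wt_halves.
rewrite (card_set_pair (in_coset m i c) (fun x y => wt (x + y) + wt y == w)%N).
under eq_bigr do rewrite card_wt_pairs.
exact: (sum_by_wt (in_coset m i c) (fun a => wt_pair_count (2 ^ m) a w)).
Qed.

Lemma coset_count_lo w : (i < 2 ^ m)%N ->
  coset_count m.+1 i c w =
  (\sum_(0 <= w' < (minn w (2 ^ m)).+1 | odd w' == odd w)
     coset_count m i c w' * 'C(2 ^ m - w', (w - w') %/ 2) * 2 ^ w')%N.
Proof.
move=> hm; rewrite coset_count_lo_sum //.
rewrite (big_nat_widen _ _ (2 ^ m).+1) ?ltnS ?geq_minr //.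
rewrite -(big_mkord xpredT (fun w' => coset_count m i c w' * wt_pair_count _ w' w)%N).
rewrite [RHS]big_mkcond.
apply: eq_big_nat => w' /andP [_ le_w']; rewrite ltnS in le_w'.
rewrite /wt_pair_count ltnS leq_min -ltnS le_w' andbT.
by case: (_ && _); rewrite ?mulnA ?muln0.
Qed.

(* Case i >= N: v |-> v_hi is a bijection onto the coset of i - N. *)
Lemma coset_count_hi_even w : (2 ^ m <= i)%N ->
  coset_count m.+1 i c (2 * w)%N = coset_count m (i - 2 ^ m) c w.
Proof.
move=> hm; apply: (@card_set_bij _ _ (@vhi m) (fun x => vjoin x x)).
  move=> v /andP []; rewrite in_coset_hi // wt_halves => /andP [/eqP elh].
  rewrite elh addnn -mul2n eqn_mul2l /= => -> ->; split => //.
  by apply: halves_inj; rewrite ?vlo_join ?vhi_join ?elh.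
move=> x /andP [xC /eqP ew]; rewrite vhi_join in_coset_hi // vlo_join vhi_join.
by rewrite eqxx xC wt_join ew addnn -mul2n eqxx.
Qed.

Lemma coset_count_hi_odd w : (2 ^ m <= i)%N ->
  coset_count m.+1 i c (2 * w)%N.+1 = 0%N.
Proof.
move=> hm; apply/eqP; rewrite cards_eq0; apply/eqP/setP => v; rewrite !inE.
apply/negbTE; rewrite in_coset_hi // wt_halves; case: eqP => //= ->.
by apply/negP => /andP [_ /eqP /(congr1 odd)]; rewrite addnn odd_double /= oddM.
Qed.

End CosetCounts.

(* Length one: the coset of index 0 is the single word (c). *)
Lemma coset_count0 c w : coset_count 0 0 c w = ((c != 0) == w :> nat).
Proof.
have GN0 (y : 'rV['F_2]_(2 ^ 0)) : y *m GN 0 = y.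
  by apply/rowP => j; rewrite !mxE big_ord1 !ord1 !mxE mulr1.
have coset0 v : in_coset 0 0 c v = (v == const_mx c).
  apply/existsP/eqP => [[z /andP [/forallP zc /eqP ->]] | ->].
    by apply/rowP => j; rewrite GN0 ord1 mxE; have /andP [_ /eqP] := zc ord0; apply.
  exists (const_mx c); rewrite GN0 eqxx andbT.
  by apply/forallP => k; rewrite ord1 mxE eqxx.
rewrite /coset_count card_set_sum (bigD1 (const_mx c)) //= big1 => [|v /negbTE nv].
  by rewrite coset0 eqxx /wt card_set_sum big_ord1 mxE addn0.
by rewrite coset0 nv.
Qed.

Lemma Scount_coset n i w : (i < 2 ^ n)%N -> Scount n i w = coset_count n i 1 w.
Proof.
by move=> lt_i; apply: eq_card => v; rewrite !inE -(tailspan_coset lt_i) scale1r.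
Qed.

Lemma Tcount_coset n i w : (i < 2 ^ n)%N -> Tcount n i w = coset_count n i 0 w.
Proof.
by move=> lt_i; apply: eq_card => v; rewrite !inE -(tailspan_coset lt_i) scale0r subr0.
Qed.

Local Close Scope ring_scope.

Lemma count_recursions (F : nat -> nat -> nat -> nat) (c : 'F_2) m :
  (forall n i w, i < 2 ^ n -> F n i w = coset_count n i c w) ->
  (forall i w, i < 2 ^ m.+1 %/ 2 ->
     F m.+1 i w =
     \sum_(0 <= w' < (minn w (2 ^ m.+1 %/ 2)).+1 | odd w' == odd w)
        F m i w' * 'C(2 ^ m.+1 %/ 2 - w', (w - w') %/ 2) * 2 ^ w') /\
  (forall i w, 2 ^ m.+1 %/ 2 <= i < 2 ^ m.+1 ->
     F m.+1 i (2 * w) = F m (i - 2 ^ m.+1 %/ 2) w /\ F m.+1 i (2 * w).+1 = 0).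
Proof.
move=> eF; rewrite expnS mulKn //; split=> [i w lt_i | i w /andP [le_i lt_i]].
  rewrite eF ?coset_count_lo ?expnS ?ltn_mul2l //; last by lia.
  by apply: eq_bigr => w' _; rewrite eF.
have lt_i' : i - 2 ^ m < 2 ^ m by lia.
by rewrite !eF ?expnS ?coset_count_hi_even ?coset_count_hi_odd.
Qed.

Theorem mainTheorem2 (n : nat) (hn : (1 <= n)%N) :
  (Scount 0 0 0 = 0%N /\ Scount 0 0 1 = 1%N) /\
  (forall i w, (i < 2 ^ n %/ 2)%N ->
     Scount n i w =
     (\sum_(0 <= w' < (minn w (2 ^ n %/ 2)).+1 | odd w' == odd w)
        Scount n.-1 i w' * 'C(2 ^ n %/ 2 - w', (w - w') %/ 2) * 2 ^ w')%N) /\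
  (forall i w, (2 ^ n %/ 2 <= i < 2 ^ n)%N ->
     Scount n i (2 * w) = Scount n.-1 (i - 2 ^ n %/ 2) w /\
     Scount n i (2 * w).+1 = 0%N) /\
  (Tcount 0 0 0 = 1%N /\ Tcount 0 0 1 = 0%N) /\
  (forall i w, (i < 2 ^ n %/ 2)%N ->
     Tcount n i w =
     (\sum_(0 <= w' < (minn w (2 ^ n %/ 2)).+1 | odd w' == odd w)
        Tcount n.-1 i w' * 'C(2 ^ n %/ 2 - w', (w - w') %/ 2) * 2 ^ w')%N) /\
  (forall i w, (2 ^ n %/ 2 <= i < 2 ^ n)%N ->
     Tcount n i (2 * w) = Tcount n.-1 (i - 2 ^ n %/ 2) w /\
     Tcount n i (2 * w).+1 = 0%N).
Proof.
case: n hn => // m _.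
have [S_lo S_hi] := count_recursions m Scount_coset.
have [T_lo T_hi] := count_recursions m Tcount_coset.
rewrite /= !Scount_coset // !Tcount_coset // !coset_count0 oner_eq0 eqxx.
by do ![exact: S_lo | exact: S_hi | exact: T_lo | exact: T_hi | split].
Qed.
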